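(* $\mathbf{V}_{\mathcal{D}}=\mathbf{V}_{\mathcal{L}}\vee\mathbf{V}_{\mathcal{R}}$, the join being taken in the lattice of subvarieties of the variety of idempotent semirings.
   Context: An idempotent semiring is an algebra $(S,+,\cdot)$ with $(S,+)$, $(S,\cdot)$ bands and both distributive laws; addition not assumed commutative. $\mathbf{V}_{\mathcal{D}}$, $\mathbf{V}_{\mathcal{L}}$, $\mathbf{V}_{\mathcal{R}}$ denote the varieties of idempotent semirings satisfying $x\approx xyx+x+xyx$, $x\approx xy+x+xy$, $x\approx yx+x+yx$ respectively (equivalently, those on which the Green's relation $\mathcal{D}^{\bullet}$, resp. $\mathcal{L}^{\bullet}$, $\mathcal{R}^{\bullet}$, is the least distributive lattice congruence). The join of two varieties is the smallest variety containing both. *)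

(** An idempotent semiring: the additive and multiplicative reducts are bands (associative,
    idempotent), both distributive laws hold; addition is NOT assumed commutative. *)
Record isemiring := ISR {
  car :> Type;
  sadd : car -> car -> car;
  smul : car -> car -> car;
  sadd_assoc : forall x y z, sadd x (sadd y z) = sadd (sadd x y) z;
  sadd_idem  : forall x, sadd x x = x;
  smul_assoc : forall x y z, smul x (smul y z) = smul (smul x y) z;
  smul_idem  : forall x, smul x x = x;
  smul_distl : forall x y z, smul x (sadd y z) = sadd (smul x y) (smul x z);
  smul_distr : forall x y z, smul (sadd x y) z = sadd (smul x z) (smul y z)
}.

Arguments sadd {i} _ _.
Arguments smul {i} _ _.

Inductive term : Type :=
| tvar : nat -> term
| tadd : term -> term -> term
| tmul : term -> term -> term.

Fixpoint teval (S : isemiring) (v : nat -> S) (t : term) : S :=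
  match t with
  | tvar n => v n
  | tadd a b => sadd (teval S v a) (teval S v b)
  | tmul a b => smul (teval S v a) (teval S v b)
  end.

Definition holds (S : isemiring) (p q : term) : Prop :=
  forall v : nat -> S, teval S v p = teval S v q.

(** A class of idempotent semirings is a variety (subvariety of the variety
    of idempotent semirings) iff it is the class of all idempotent semirings
    satisfying some set E of identities (Birkhoff: equivalently HSP-closed). *)
Definition is_variety (K : isemiring -> Prop) : Prop :=
  exists E : term -> term -> Prop,
    forall S, K S <-> (forall p q, E p q -> holds S p q).

Definition in_VD (S : isemiring) : Prop :=
  forall x y : S, x = sadd (sadd (smul (smul x y) x) x) (smul (smul x y) x).

Definition in_VL (S : isemiring) : Prop :=
  forall x y : S, x = sadd (sadd (smul x y) x) (smul x y).

Definition in_VR (S : isemiring) : Prop :=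
  forall x y : S, x = sadd (sadd (smul y x) x) (smul y x).

Definition is_join (K K1 K2 : isemiring -> Prop) : Prop :=
  is_variety K /\
  (forall S, K1 S -> K S) /\ (forall S, K2 S -> K S) /\
  (forall K', is_variety K' -> (forall S, K1 S -> K' S) ->
              (forall S, K2 S -> K' S) -> forall S, K S -> K' S).

From Stdlib Require Import FunctionalExtensionality ProofIrrelevance.

(* In V_D the additive order satisfies x <= x t x, which forces the multiplicative
   band to satisfy zyx = zxyx.  Hence the right regular representation
   a |-> (c |-> c a) identifies Green-L-related elements (ab = a, ba = b), and its
   image, a homomorphic image of S, satisfies x = yx + x + yx, i.e. lies in V_R.
   Dually the left regular representation maps S onto a member of V_L.  Since
   a = aa = ab = bb = b as soon as both translations of a and b agree, S is a
   subdirect product of the two images and so satisfies every identity of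
   V_L v V_R. *)

Local Infix "⊕" := sadd (at level 50, left associativity).
Local Infix "⊗" := smul (at level 40, left associativity).

Lemma teval_hom (S T : isemiring) (g : S -> T)
  (g_add : forall a b, g (a ⊕ b) = g a ⊕ g b)
  (g_mul : forall a b, g (a ⊗ b) = g a ⊗ g b) (v : nat -> S) (t : term) :
  teval T (fun n => g (v n)) t = g (teval S v t).
Proof. induction t; simpl; rewrite ?g_add, ?g_mul; congruence. Qed.

Section Image.

Context {S : isemiring} {X : Type} (addX mulX : X -> X -> X) (f : S -> X).
Hypothesis f_add : forall a b, f (a ⊕ b) = addX (f a) (f b).
Hypothesis f_mul : forall a b, f (a ⊗ b) = mulX (f a) (f b).

Definition image_car : Type := {x : X | exists a, x = f a}.

Definition to_image (a : S) : image_car := exist _ (f a) (ex_intro _ a eq_refl).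

Lemma to_image_surj (x : image_car) : exists a, x = to_image a.
Proof.
  destruct x as [x [a Ha]]; exists a; subst x.
  unfold to_image; apply subset_eq_compat; reflexivity.
Qed.

Lemma to_image_eq (a b : S) : f a = f b -> to_image a = to_image b.
Proof. intros E; apply subset_eq_compat, E. Qed.

Definition image_add (x y : image_car) : image_car.
Proof.
  refine (exist _ (addX (proj1_sig x) (proj1_sig y)) _).
  destruct x as [x [a ->]], y as [y [b ->]]; exists (a ⊕ b); symmetry; apply f_add.
Defined.

Definition image_mul (x y : image_car) : image_car.
Proof.
  refine (exist _ (mulX (proj1_sig x) (proj1_sig y)) _).
  destruct x as [x [a ->]], y as [y [b ->]]; exists (a ⊗ b); symmetry; apply f_mul.
Defined.

Lemma to_image_add (a b : S) : to_image (a ⊕ b) = image_add (to_image a) (to_image b).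
Proof. apply subset_eq_compat, f_add. Qed.

Lemma to_image_mul (a b : S) : to_image (a ⊗ b) = image_mul (to_image a) (to_image b).
Proof. apply subset_eq_compat, f_mul. Qed.

Ltac image_from_source :=
  intros;
  repeat match goal with x : image_car |- _ => destruct (to_image_surj x) as [? ->]; clear x end;
  rewrite <- ?to_image_add, <- ?to_image_mul, <- ?to_image_add, <- ?to_image_mul;
  f_equal.

Definition image_isemiring : isemiring.
Proof.
  refine (ISR image_car image_add image_mul _ _ _ _ _ _); image_from_source.
  - apply sadd_assoc.
  - apply sadd_idem.
  - apply smul_assoc.
  - apply smul_idem.
  - apply smul_distl.
  - apply smul_distr.
Defined.

Lemma to_image_sadd (a b : S) :
  @sadd image_isemiring (to_image a) (to_image b) = to_image (a ⊕ b).
Proof. symmetry; apply to_image_add. Qed.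

Lemma to_image_smul (a b : S) :
  @smul image_isemiring (to_image a) (to_image b) = to_image (a ⊗ b).
Proof. symmetry; apply to_image_mul. Qed.

Lemma image_holds (p q : term) :
  holds image_isemiring p q -> forall v, f (teval S v p) = f (teval S v q).
Proof.
  intros Hpq v.
  specialize (Hpq (fun n => to_image (v n))).
  rewrite !(teval_hom S image_isemiring to_image to_image_add to_image_mul) in Hpq.
  exact (f_equal (@proj1_sig _ _) Hpq).
Qed.

End Image.

Section Translations.

Variable S : isemiring.

Definition rtrans (a : S) : S -> S := fun c => c ⊗ a.
Definition ltrans (a : S) : S -> S := fun c => a ⊗ c.
Definition fun_add (g h : S -> S) : S -> S := fun c => g c ⊕ h c.

Lemma rtrans_add (a b : S) : rtrans (a ⊕ b) = fun_add (rtrans a) (rtrans b).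
Proof. extensionality c; apply smul_distl. Qed.

Lemma rtrans_mul (a b : S) : rtrans (a ⊗ b) = (fun g h c => h (g c)) (rtrans a) (rtrans b).
Proof. extensionality c; apply smul_assoc. Qed.

Lemma ltrans_add (a b : S) : ltrans (a ⊕ b) = fun_add (ltrans a) (ltrans b).
Proof. extensionality c; apply smul_distr. Qed.

Lemma ltrans_mul (a b : S) : ltrans (a ⊗ b) = (fun g h c => g (h c)) (ltrans a) (ltrans b).
Proof. extensionality c; symmetry; apply smul_assoc. Qed.

Definition right_regular_image : isemiring := image_isemiring _ _ rtrans rtrans_add rtrans_mul.
Definition left_regular_image : isemiring := image_isemiring _ _ ltrans ltrans_add ltrans_mul.

Lemma trans_inj (a b : S) : rtrans a = rtrans b -> ltrans a = ltrans b -> a = b.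
Proof.
  intros Er El.
  pose proof (f_equal (fun g => g a) Er) as Ha; pose proof (f_equal (fun g => g b) El) as Hb.
  unfold rtrans, ltrans in Ha, Hb; rewrite smul_idem in Ha, Hb; congruence.
Qed.

End Translations.

Definition op_isemiring (S : isemiring) : isemiring.
Proof.
  refine (ISR S (@sadd S) (fun x y => y ⊗ x) _ _ _ _ _ _); intros.
  - apply sadd_assoc.
  - apply sadd_idem.
  - symmetry; apply smul_assoc.
  - apply smul_idem.
  - apply smul_distr.
  - apply smul_distl.
Defined.

Lemma in_VD_op (S : isemiring) : in_VD S -> in_VD (op_isemiring S).
Proof. intros H x y; simpl; rewrite smul_assoc; apply H. Qed.

Ltac smul_rassoc := repeat rewrite <- smul_assoc.

Section VD_band.

Variable S : isemiring.

Lemma smul_idem2_r (a b r : S) : a ⊗ (b ⊗ (a ⊗ (b ⊗ r))) = a ⊗ (b ⊗ r).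
Proof. rewrite !smul_assoc, <- (smul_assoc _ (a ⊗ b) a b), smul_idem; reflexivity. Qed.

Lemma smul_idem2 (a b : S) : a ⊗ (b ⊗ (a ⊗ b)) = a ⊗ b.
Proof. rewrite !smul_assoc, <- (smul_assoc _ (a ⊗ b) a b), smul_idem; reflexivity. Qed.

Lemma smul_idem3_r (a b c r : S) :
  a ⊗ (b ⊗ (c ⊗ (a ⊗ (b ⊗ (c ⊗ r))))) = a ⊗ (b ⊗ (c ⊗ r)).
Proof.
  transitivity ((a ⊗ b ⊗ c) ⊗ (a ⊗ b ⊗ c) ⊗ r); [smul_rassoc; reflexivity|].
  rewrite smul_idem; smul_rassoc; reflexivity.
Qed.

(* The additive reduct of an idempotent semiring need not be commutative, so
   [a] is below [b] when [a] absorbs [b] on both sides. *)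
Definition sle (a b : S) : Prop := a ⊕ b = a /\ b ⊕ a = a.

Lemma sle_trans (a b c : S) : sle a b -> sle b c -> sle a c.
Proof.
  intros [H1 H2] [H3 H4]; split.
  - transitivity (a ⊕ b ⊕ c); [rewrite H1; reflexivity|].
    rewrite <- sadd_assoc, H3; exact H1.
  - transitivity (c ⊕ (b ⊕ a)); [rewrite H2; reflexivity|].
    rewrite sadd_assoc, H4; exact H2.
Qed.

Lemma sle_antisym (a b : S) : sle a b -> sle b a -> a = b.
Proof. intros [_ H2] [H3 _]; rewrite <- H2; exact H3. Qed.

Lemma sle_mull (a b c : S) : sle a b -> sle (c ⊗ a) (c ⊗ b).
Proof. intros [H1 H2]; split; rewrite <- smul_distl; congruence. Qed.

Lemma sle_mulr (a b c : S) : sle a b -> sle (a ⊗ c) (b ⊗ c).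
Proof. intros [H1 H2]; split; rewrite <- smul_distr; congruence. Qed.

Hypothesis HD : in_VD S.

Lemma VD_sle_sandwich (a t : S) : sle a (a ⊗ t ⊗ a).
Proof.
  pose proof (HD a t) as E; set (u := a ⊗ t ⊗ a) in *; split; rewrite E.
  - rewrite <- sadd_assoc, sadd_idem; reflexivity.
  - rewrite !sadd_assoc, sadd_idem; reflexivity.
Qed.

Lemma VD_mul_insert (z y x : S) : z ⊗ y ⊗ x = z ⊗ x ⊗ y ⊗ x.
Proof.
  apply sle_antisym.
  - apply sle_trans with (z ⊗ x ⊗ y ⊗ z ⊗ y ⊗ x).
    + generalize (sle_mulr _ _ (y ⊗ x) (VD_sle_sandwich z (x ⊗ y))).
      smul_rassoc; auto.
    + generalize (sle_mulr _ _ x (sle_mull _ _ (z ⊗ x ⊗ y ⊗ z) (VD_sle_sandwich y (z ⊗ x)))).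
      smul_rassoc; rewrite smul_idem2_r, smul_idem3_r; auto.
  - apply sle_trans with (z ⊗ y ⊗ x ⊗ z ⊗ x ⊗ y ⊗ x).
    + generalize (sle_mulr _ _ (x ⊗ y ⊗ x) (VD_sle_sandwich z (y ⊗ x))).
      smul_rassoc; auto.
    + generalize (sle_mulr _ _ (y ⊗ x) (sle_mull _ _ (z ⊗ y ⊗ x ⊗ z) (VD_sle_sandwich x (z ⊗ y)))).
      smul_rassoc; rewrite smul_idem2_r, smul_idem3_r, smul_idem2; auto.
Qed.

Lemma VD_rtrans_eq (a b : S) : a ⊗ b = a -> b ⊗ a = b -> rtrans S a = rtrans S b.
Proof.
  intros Hab Hba; extensionality c; unfold rtrans.
  pose proof (VD_mul_insert c b a) as E.
  rewrite <- (smul_assoc _ c b a), Hba, <- (smul_assoc _ c a b), Hab,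
    <- (smul_assoc _ c a a), smul_idem in E.
  symmetry; exact E.
Qed.

End VD_band.

Lemma VD_ltrans_eq (S : isemiring) (HD : in_VD S) (a b : S) :
  b ⊗ a = a -> a ⊗ b = b -> ltrans S a = ltrans S b.
Proof. exact (VD_rtrans_eq (op_isemiring S) (in_VD_op S HD) a b). Qed.

Lemma right_regular_image_VR (S : isemiring) : in_VD S -> in_VR (right_regular_image S).
Proof.
  intros HD X Y; unfold right_regular_image.
  destruct (to_image_surj (rtrans S) X) as [x ->], (to_image_surj (rtrans S) Y) as [y ->].
  rewrite !to_image_smul, !to_image_sadd; apply to_image_eq, VD_rtrans_eq; [exact HD | |].
  - rewrite !smul_distl, !smul_assoc, smul_idem; symmetry; apply HD.
  - rewrite !smul_distr, <- !smul_assoc, !smul_idem; reflexivity.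
Qed.

Lemma left_regular_image_VL (S : isemiring) : in_VD S -> in_VL (left_regular_image S).
Proof.
  intros HD X Y; unfold left_regular_image.
  destruct (to_image_surj (ltrans S) X) as [x ->], (to_image_surj (ltrans S) Y) as [y ->].
  rewrite !to_image_smul, !to_image_sadd; apply to_image_eq, VD_ltrans_eq; [exact HD | |].
  - rewrite !smul_distr, smul_idem; symmetry; apply HD.
  - rewrite !smul_distl, !smul_assoc, !smul_idem; reflexivity.
Qed.

Lemma VD_is_variety : is_variety in_VD.
Proof.
  exists (fun p q => p = tvar 0 /\ q = tadd (tadd (tmul (tmul (tvar 0) (tvar 1)) (tvar 0)) (tvar 0))
                                            (tmul (tmul (tvar 0) (tvar 1)) (tvar 0))).
  intros S; split.
  - intros HD p q [-> ->] v; apply HD.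
  - intros H x y; exact (H _ _ (conj eq_refl eq_refl) (fun n => match n with 0 => x | _ => y end)).
Qed.

Lemma VL_sub_VD (S : isemiring) : in_VL S -> in_VD S.
Proof. intros HL x y; rewrite <- smul_assoc; apply HL. Qed.

Lemma VR_sub_VD (S : isemiring) : in_VR S -> in_VD S.
Proof. intros HR x y; apply HR. Qed.

Theorem corollary4p10 : is_join in_VD in_VL in_VR.
Proof.
  split; [exact VD_is_variety | split; [exact VL_sub_VD | split; [exact VR_sub_VD |]]].
  intros K [E HE] HL HR S HD; apply HE; intros p q Hpq v.
  assert (Hr : holds (right_regular_image S) p q)
    by (apply (HE _); [apply HR, right_regular_image_VR, HD | exact Hpq]).
  assert (Hl : holds (left_regular_image S) p q)
    by (apply (HE _); [apply HL, left_regular_image_VL, HD | exact Hpq]).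
  apply trans_inj; [exact (image_holds _ _ _ _ _ p q Hr v) | exact (image_holds _ _ _ _ _ p q Hl v)].
Qed.
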